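(* Let $\Omega\subseteq\mathbb{R}^n$ be open and let $\mathcal{F}\subseteq C(\Omega)$ be a set of continuous real functions on $\Omega$. Then the interval hull $\mathrm{hull}(\mathcal{F})$ is a D-continuous interval function.
   Context: $\overline{\mathbb{R}}=\mathbb{R}\cup\{\pm\infty\}$, $\mathbb{I}\overline{\mathbb{R}}$ is the set of closed intervals $[\underline a,\overline a]$ with $\underline a\le\overline a$ in $\overline{\mathbb{R}}$, $a\in\overline{\mathbb{R}}$ identified with $[a,a]$. $\mathbb{A}(X)$ is the set of functions $X\to\mathbb{I}\overline{\mathbb{R}}$, written $f=[\underline f,\overline f]$. A function $\psi=[\underline\psi,\overline\psi]\in\mathbb{A}(\Omega)$ is called continuous if $\underline\psi$ and $\overline\psi$ are continuous extended-real-valued functions. A continuous interval enclosure of $\mathcal{F}$ is a continuous $\psi\in\mathbb{A}(\Omega)$ with $\phi(x)\in\psi(x)$ for all $x\in\Omega$, $\phi\in\mathcal{F}$; with $\hat{\mathcal{F}}$ the set of all such enclosures, $\mathrm{hull}(\mathcal{F})(x)=\bigcap_{\psi\in\hat{\mathcal{F}}}\psi(x)$. $B_\delta(x)=\{y\in\Omega:\|x-y\|<\delta\}$. For dense $D\subseteq\Omega$ and $f\in\mathbb{A}(D)$: $I(D,\Omega,f)(x)=\sup_{\delta>0}\inf\{z\in f(y):y\in B_\delta(x)\cap D\}$, $S(D,\Omega,f)(x)=\inf_{\delta>0}\sup\{z\in f(y):y\in B_\delta(x)\cap D\}$, $F(D,\Omega,f)(x)=[I(D,\Omega,f)(x),S(D,\Omega,f)(x)]$.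 $f\in\mathbb{A}(\Omega)$ is D-continuous if $F(D,\Omega,f)=f$ for every dense subset $D$ of $\Omega$. *)

From HB Require Import structures.
From mathcomp Require Import all_boot all_order all_algebra.
From mathcomp Require Import all_classical all_reals all_analysis.
Set Implicit Arguments. Unset Strict Implicit. Unset Printing Implicit Defensive.
Import Order.TTheory GRing.Theory Num.Theory.
Import numFieldNormedType.Exports.
Local Open Scope classical_set_scope.
Local Open Scope ring_scope.

(* A function in A(Omega) is represented by its two endpoint functions
   lo, hi : 'rV[R]_n -> \bar R (values outside Omega are irrelevant). *)
Record ifun (R : realType) (n : nat) := IFun {
  ilo : 'rV[R]_n -> \bar R ;
  ihi : 'rV[R]_n -> \bar R }.

Definition is_ifun (R : realType) (n : nat) (Om : set 'rV[R]_n) (f : ifun R n) :=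
  forall x, Om x -> (ilo f x <= ihi f x)%E.

Definition imem (R : realType) (n : nat) (f : ifun R n) (x : 'rV[R]_n) (z : \bar R) :=
  (ilo f x <= z <= ihi f x)%E.

Definition icontinuous (R : realType) (n : nat) (Om : set 'rV[R]_n) (f : ifun R n) :=
  is_ifun Om f /\ {within Om, continuous (ilo f)} /\ {within Om, continuous (ihi f)}.

Definition enclosure (R : realType) (n : nat) (Om : set 'rV[R]_n)
    (Fam : set ('rV[R]_n -> R)) (psi : ifun R n) :=
  icontinuous Om psi /\ forall x phi, Om x -> Fam phi -> imem psi x (phi x)%:E.

Definition hull (R : realType) (n : nat) (Om : set 'rV[R]_n)
    (Fam : set ('rV[R]_n -> R)) (x : 'rV[R]_n) : set (\bar R) :=
  [set z | forall psi, enclosure Om Fam psi -> imem psi x z].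

Definition Bdelta (R : realType) (n : nat) (Om : set 'rV[R]_n) (x : 'rV[R]_n) (d : R) :=
  [set y | Om y /\ `|x - y| < d].

Definition I_op (R : realType) (n : nat) (D Om : set 'rV[R]_n) (f : ifun R n)
    (x : 'rV[R]_n) : \bar R :=
  ereal_sup [set ereal_inf [set z | exists y, (Bdelta Om x d `&` D) y /\ imem f y z]
            | d in [set d : R | 0 < d]].

Definition S_op (R : realType) (n : nat) (D Om : set 'rV[R]_n) (f : ifun R n)
    (x : 'rV[R]_n) : \bar R :=
  ereal_inf [set ereal_sup [set z | exists y, (Bdelta Om x d `&` D) y /\ imem f y z]
            | d in [set d : R | 0 < d]].

Definition dense_in (R : realType) (n : nat) (D Om : set 'rV[R]_n) :=
  D `<=` Om /\ Om `<=` closure D.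

(* f in A(Omega) is D-continuous: F(D,Omega,f) = f for every dense D in Omega *)
Definition D_continuous (R : realType) (n : nat) (Om : set 'rV[R]_n) (f : ifun R n) :=
  forall D, dense_in D Om ->
    forall x, Om x -> I_op D Om f x = ilo f x /\ S_op D Om f x = ihi f x.

From HB Require Import structures.
From mathcomp Require Import all_boot all_order all_algebra.
From mathcomp Require Import all_classical all_reals all_analysis.
From mathcomp Require Import lra.
Import Order.TTheory GRing.Theory Num.Theory.
Import numFieldNormedType.Exports.
Local Open Scope classical_set_scope.
Local Open Scope ring_scope.
Set Implicit Arguments. Unset Strict Implicit.

(* The hull is the interval function [lo, hi], where lo (resp. hi) is the
   pointwise sup (resp. inf) of the lower (resp. upper) ends of the continuous
   enclosures.  As a sup of continuous functions lo is lower semicontinuous,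
   which gives I(D, Omega, lo) >= lo.  Conversely, if t lies below lo on
   B_d(x) /\ D, then every phi in F, which dominates lo, is >= t on the dense
   set B_d(x) /\ D, hence by continuity on B_d(x); a continuous extended-real
   bump equal to t at x, at most t on B_d(x) and -oo outside it is then the
   lower end of an enclosure, so lo(x) >= t.  The upper end follows by
   applying this to the family -F. *)

Lemma lee_of_fin_lt (R : realType) (a b : \bar R) :
  (forall t : R, (t%:E < a)%E -> (t%:E <= b)%E) -> (a <= b)%E.
Proof.
move=> ab; rewrite leNgt; apply/negP => ba.
have [t bt ta] : exists2 t : R, (b < t%:E)%E & (t%:E < a)%E.
  move: ba {ab}; case: a => [a||]; case: b => [b||] //=.
  - by rewrite lte_fin => /midf_lt[? ?]; exists ((b + a) / 2); rewrite lte_fin.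
  - by move=> _; exists (a - 1); rewrite ?ltNyr // lte_fin gtrDl ltrN10.
  - by move=> _; exists (b + 1); rewrite ?ltry // lte_fin ltrDl.
  - by move=> _; exists 0; rewrite ?ltNyr ?ltry.
by have := ab t ta; rewrite leNgt bt.
Qed.

Lemma continuous_expand (R : realType) (T : topologicalType) (g : T -> R) :
  continuous g -> (forall y, `|g y| <= 1) -> continuous (fun y => expand (g y)).
Proof.
move=> gc g1 y A /= /nbhs_ballP[e e0 eA].
apply: (@filterS _ _ _ (g @^-1` ball (g y) e)); last exact: gc y _ (nbhsx_ballx _ _ e0).
move=> z /= gyz; apply: eA.
by move: gyz; rewrite /ball /= /ereal_ball !expandK ?inE ?g1.
Qed.

Lemma ereal_bump (R : realType) (V : normedModType R) (x : V) (d t : R) :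
  0 < d -> exists g : V -> \bar R,
    [/\ continuous g, g x = t%:E, forall y, (g y <= t%:E)%E &
        forall y, d <= `|x - y| -> g y = -oo%E].
Proof.
move=> d0; pose c := contract t%:E.
have /andP[cN1 c1] : -1 <= c <= 1 by rewrite -ler_norml contract_le1.
(* [expand] of a real tent ranging in [-1, contract t]; the value -1, reached
   at distance [d] from [x], is sent to -oo. *)
pose g (y : V) : R^o := c - (c + 1) * Num.min 1 (`|x - y| / d).
have g_le_c y : g y <= c.
  by rewrite gerBl mulr_ge0 ?le_min ?ler01 ?divr_ge0 //; lra.
have gN1 y : -1 <= g y.
  have : (c + 1) * Num.min 1 (`|x - y| / d) <= c + 1.
    by rewrite -{2}[c + 1]mulr1 ler_wpM2l ?ge_min ?lexx //; lra.
  rewrite /g; lra.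
have gc : continuous g.
  move=> y; apply: cvgB; first exact: cvg_cst.
  apply: cvgM; first exact: cvg_cst.
  apply: (@continuous_min _ _ (fun=> 1) (fun y => `|x - y| / d)).
    exact: cst_continuous.
  apply: cvgM; last exact: cvg_cst.
  by apply: cvg_norm; apply: cvgB; [exact: cvg_cst | exact: cvg_id].
exists (fun y => expand (g y)); split.
- apply: continuous_expand gc _ => y.
  by rewrite ler_norml gN1 (le_trans (g_le_c y)).
- by rewrite /g subrr normr0 mul0r min_r // mulr0 subr0 contractK.
- by move=> y; rewrite -[t%:E]contractK le_expand.
- move=> y dxy; apply: expandN1.
  by rewrite /g min_l ?ler_pdivlMr ?mul1r // mulr1 opprD addrA subrr sub0r.
Qed.

Lemma continuous_ge_dense (T : topologicalType) (R : realType) (Om D U : set T)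
    (phi : T -> R) (t : R) :
  open Om -> open U -> {within Om, continuous phi} -> Om `<=` closure D ->
  (forall z, D z -> Om z -> U z -> t <= phi z) ->
  forall y, Om y -> U y -> t <= phi y.
Proof.
move=> Om_open U_open phi_cont OmD ge_t y Oy Uy; rewrite leNgt; apply/negP => phiy.
have phi_lt : nbhs y (phi @^-1` [set r | r < t]).
  move: phi_cont; rewrite continuous_open_subspace // => /(_ y (mem_set Oy)).
  by apply; apply: open_nbhs_nbhs; split; [exact: open_lt | exact: phiy].
have OmU : nbhs y (Om `&` U) by apply: open_nbhs_nbhs; split => //; exact: openI.
have [z [Dz [phiz [Oz Uz]]]] := OmD y Oy _ (filterI phi_lt OmU).
by have := ge_t z Dz Oz Uz; rewrite leNgt phiz.
Qed.

Lemma ereal_inf_imem (R : realType) (n : nat) (f : ifun R n) (X : set 'rV[R]_n) :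
  (forall y, X y -> (ilo f y <= ihi f y)%E) ->
  ereal_inf [set z | exists y, X y /\ imem f y z] = ereal_inf (ilo f @` X).
Proof.
move=> f_le; apply/eqP; rewrite eq_le; apply/andP; split.
- apply: le_ereal_inf_tmp => _ [y Xy <-]; apply: ereal_inf_lbound.
  by exists y; split => //; rewrite /imem lexx f_le.
- apply: le_ereal_inf_tmp => z [y [Xy /andP[fz _]]]; apply: le_trans fz.
  by apply: ereal_inf_lbound; exists y.
Qed.

Lemma I_opE (R : realType) (n : nat) (D Om : set 'rV[R]_n) (f : ifun R n) x :
  is_ifun Om f ->
  I_op D Om f x = ereal_sup [set ereal_inf (ilo f @` (Bdelta Om x d `&` D))
                            | d in [set d : R | 0 < d]].
Proof.
move=> f_ifun; congr ereal_sup; apply: eq_imagel => d _.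
by rewrite ereal_inf_imem // => y [[Oy _] _]; exact: f_ifun.
Qed.

Definition ifun_opp (R : realType) (n : nat) (f : ifun R n) :=
  IFun (fun y => - ihi f y)%E (fun y => - ilo f y)%E.

Definition fam_opp (R : realType) (n : nat) (Fam : set ('rV[R]_n -> R)) :=
  [set phi | Fam (fun y => - phi y)].

Lemma is_ifun_opp (R : realType) (n : nat) (Om : set 'rV[R]_n) (f : ifun R n) :
  is_ifun Om f -> is_ifun Om (ifun_opp f).
Proof. by move=> f_ifun x Ox; rewrite /= leeN2 f_ifun. Qed.

Lemma S_op_opp (R : realType) (n : nat) (D Om : set 'rV[R]_n) (f : ifun R n) x :
  S_op D Om f x = (- I_op D Om (ifun_opp f) x)%E.
Proof.
rewrite /S_op /I_op -ereal_infN image_comp; congr ereal_inf.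
apply: eq_imagel => d _ /=; rewrite -ereal_supN; congr ereal_sup.
apply/seteqP; split => [z [y [By fz]]|_ [z [y [By fz]] <-]].
- exists (- z)%E; last exact: oppeK.
  by exists y; split => //; move: fz; rewrite /imem /= !leeN2 andbC.
- by exists y; split => //; move: fz; rewrite /imem /= leeNr leeNl andbC.
Qed.

Section hull_bounds.
Variables (R : realType) (n : nat) (Om : set 'rV[R]_n) (Fam : set ('rV[R]_n -> R)).

Definition hull_lo x := ereal_sup [set ilo psi x | psi in enclosure Om Fam].
Definition hull_hi x := ereal_inf [set ihi psi x | psi in enclosure Om Fam].
Definition hull_ifun := IFun hull_lo hull_hi.

Lemma hullE x : hull Om Fam x = [set z | imem hull_ifun x z].
Proof.
apply/seteqP; split => z.
- move=> hz; apply/andP; split.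
  + by apply: ge_ereal_sup => _ [psi Hpsi <-]; have /andP[] := hz psi Hpsi.
  + by apply: le_ereal_inf_tmp => _ [psi Hpsi <-]; have /andP[] := hz psi Hpsi.
- move=> /andP[loz zhi] psi Hpsi; apply/andP; split.
  + by apply: le_trans loz; apply: ereal_sup_ubound; exists psi.
  + by apply: le_trans zhi _; apply: ereal_inf_lbound; exists psi.
Qed.

Lemma fam_in_hull phi x : Fam phi -> Om x -> hull Om Fam x (phi x)%:E.
Proof. by move=> Fphi Ox psi [_ psi_encl]; exact: psi_encl. Qed.

Lemma hull_lo_le phi x : Fam phi -> Om x -> (hull_lo x <= (phi x)%:E)%E.
Proof. by move=> Fphi Ox; have := fam_in_hull Fphi Ox; rewrite hullE => /andP[]. Qed.

Lemma hull_ifun_is_ifun : Fam !=set0 -> is_ifun Om hull_ifun.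
Proof.
move=> [phi Fphi] x Ox; have := fam_in_hull Fphi Ox.
by rewrite hullE => /andP[]; exact: le_trans.
Qed.

Lemma hull_lo_ge x d t : 0 < d ->
  (forall phi y, Fam phi -> Om y -> `|x - y| < d -> t <= phi y) ->
  (t%:E <= hull_lo x)%E.
Proof.
move=> d0 t_le; have [g [g_cont gx g_le g_oo]] := ereal_bump x t d0.
pose psi := IFun g (fun=> +oo%E).
have psi_encl : enclosure Om Fam psi.
  split; first split; [by move=> y _; rewrite leey | split|].
  - exact: continuous_subspaceT g_cont.
  - by apply: continuous_subspaceT; exact: cst_continuous.
  - move=> y phi Oy Fphi; rewrite /imem /= leey andbT.
    have [xy|dxy] := ltP `|x - y| d; last by rewrite g_oo ?leNye.
    by apply: le_trans (g_le y) _; rewrite lee_fin t_le.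
by rewrite -gx; apply: ereal_sup_ubound; exists psi.
Qed.

Hypothesis Om_open : open Om.

Lemma hull_lo_lsc x t : Om x -> (t%:E < hull_lo x)%E ->
  \forall y \near x, (t%:E < hull_lo y)%E.
Proof.
move=> Ox /ereal_sup_gt[_ [psi psi_encl <-] t_psi].
have t_near : \forall y \near x, (t%:E < ilo psi y)%E.
  have := psi_encl.1.2.1; rewrite continuous_open_subspace // => /(_ x (mem_set Ox)).
  by move=> h; exact: h _ (open_ereal_gt' t_psi).
apply: filterS t_near => y t_psiy.
by apply: lt_le_trans t_psiy _; apply: ereal_sup_ubound; exists psi.
Qed.

Hypothesis Fam_cont : forall phi, Fam phi -> {within Om, continuous phi}.

Lemma sup_inf_hull_lo D x : dense_in D Om -> Om x ->
  ereal_sup [set ereal_inf (hull_lo @` (Bdelta Om x d `&` D))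
            | d in [set d : R | 0 < d]] = hull_lo x.
Proof.
move=> [_ OmD] Ox; apply/eqP; rewrite eq_le; apply/andP; split.
- apply: ge_ereal_sup => _ [d d0 <-]; apply: lee_of_fin_lt => t t_inf.
  apply: (hull_lo_ge d0) => phi y Fphi Oy xy.
  have ball_xy : ball x d y by rewrite -ball_normE.
  apply: (continuous_ge_dense Om_open (ball_open x d) (Fam_cont Fphi) OmD _ Oy ball_xy).
  move=> z Dz Oz xz; rewrite -lee_fin; apply/ltW/(lt_le_trans t_inf).
  apply: le_trans (hull_lo_le Fphi Oz); apply: ereal_inf_lbound; exists z => //.
  by split => //; split => //; move: xz; rewrite -ball_normE.
- apply: lee_of_fin_lt => t /(hull_lo_lsc Ox) /nbhs_ballP[e e0 t_lo].
  apply: le_trans (ereal_sup_ubound _); last by exists e.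
  apply: le_ereal_inf_tmp => _ [z [[Oz xz] Dz] <-]; apply/ltW/t_lo.
  by rewrite -ball_normE.
Qed.

End hull_bounds.

Section opposite.
Variables (R : realType) (n : nat) (Om : set 'rV[R]_n).

Lemma fam_oppK (Fam : set ('rV[R]_n -> R)) : fam_opp (fam_opp Fam) = Fam.
Proof. by apply/funext => phi; congr Fam; apply/funext => y; rewrite opprK. Qed.

Lemma enclosure_opp (Fam : set ('rV[R]_n -> R)) (psi : ifun R n) :
  enclosure Om Fam psi -> enclosure Om (fam_opp Fam) (ifun_opp psi).
Proof.
move=> [[psi_ifun [lo_cont hi_cont]] psi_encl]; split; first split.
- exact: is_ifun_opp.
- by split => y; apply: continuous_comp; [exact: hi_cont | exact: oppe_continuous
    | exact: lo_cont | exact: oppe_continuous].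
- move=> y phi Oy Fphi; have /andP[lo_phi phi_hi] := psi_encl y _ Oy Fphi.
  by rewrite /imem /= leeNl -EFinN phi_hi leeNr -EFinN lo_phi.
Qed.

Lemma fam_opp_continuous (Fam : set ('rV[R]_n -> R)) : open Om ->
  (forall phi, Fam phi -> {within Om, continuous phi}) ->
  forall phi, fam_opp Fam phi -> {within Om, continuous phi}.
Proof.
move=> Om_open Fam_cont phi /Fam_cont; rewrite !continuous_open_subspace // => Nphi y Oy.
have -> : phi = (fun y => - (- phi y)) by apply/funext => z; rewrite opprK.
exact: continuousN (Nphi y Oy).
Qed.

Lemma hull_lo_opp (Fam : set ('rV[R]_n -> R)) x :
  hull_lo Om (fam_opp Fam) x = (- hull_hi Om Fam x)%E.
Proof.
rewrite /hull_hi ereal_infEN oppeK image_comp; congr ereal_sup.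
apply/seteqP; split => _ [psi psi_encl <-].
- have := enclosure_opp psi_encl; rewrite fam_oppK => psi'_encl.
  by exists (ifun_opp psi) => //=; rewrite oppeK.
- by exists (ifun_opp psi); [exact: enclosure_opp|].
Qed.

End opposite.

Theorem theorem20 (R : realType) (n : nat) (Om : set 'rV[R]_n)
    (Fam : set ('rV[R]_n -> R)) :
  open Om ->
  (forall phi, Fam phi -> {within Om, continuous phi}) ->
  Fam !=set0 ->
  exists h : ifun R n,
    is_ifun Om h /\
    (forall x, Om x -> hull Om Fam x = [set z | imem h x z]) /\
    D_continuous Om h.
Proof.
move=> Om_open Fam_cont Fam_n0; exists (hull_ifun Om Fam).
have h_ifun : is_ifun Om (hull_ifun Om Fam) := hull_ifun_is_ifun Fam_n0.
split => //; split => [x _|D D_dense x Ox]; first exact: hullE.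
rewrite S_op_opp !I_opE //=; last exact: is_ifun_opp.
split; first exact: sup_inf_hull_lo.
have -> : (fun y => - hull_hi Om Fam y)%E = hull_lo Om (fam_opp Fam).
  by apply/funext => y; rewrite hull_lo_opp.
by rewrite sup_inf_hull_lo ?hull_lo_opp ?oppeK //; exact: fam_opp_continuous.
Qed.
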